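(* Let $H$ be the graph consisting of two vertex-disjoint triangles $v_1v_2v_3$ and $w_1w_2w_3$ together with the edge $v_3w_1$. Let $n\ge 7$ and let $G$ be a graph with $n$ vertices obtained from $H$ by attaching $n-6$ pendant edges (new leaves) to vertices of $H$, none of them to $v_3$ or $w_1$. Then $\operatorname{avm}(G)>\operatorname{avm}(T_n^1(3,3))$.
   Context: $\operatorname{avm}(G)$ is the average of $|M|$ over all maximal matchings $M$ of $G$ (a matching is maximal if not properly contained in another matching). $T_n^1(3,3)$ is the graph obtained from $H$ by attaching $n-6$ pendant edges (new leaves) to $v_3$. *)

From mathcomp Require Import all_boot all_order all_algebra.
Set Implicit Arguments. Unset Strict Implicit. Unset Printing Implicit Defensive.
Import GRing.Theory Num.Theory.

Section Matchings.
Variables (V : finType) (e : rel V).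

Definition edges : {set {set V}} := [set f : {set V} | [exists x : V, exists y : V, e x y && (f == [set x; y])]].

Definition is_matching (M : {set {set V}}) : bool :=
  (M \subset edges) &&
  [forall f in M, forall g in M, (f != g) ==> [disjoint f & g]].

Definition is_maximal_matching (M : {set {set V}}) : bool :=
  is_matching M &&
  [forall N : {set {set V}}, (is_matching N && (M \subset N)) ==> (N == M)].

Definition maximal_matchings : {set {set {set V}}} :=
  [set M | is_maximal_matching M].

Definition avm : rat :=
  (\sum_(M in maximal_matchings) #|M|)%:R / #|maximal_matchings|%:R.
End Matchings.

(* ---------- The graphs of Lemma 4.2 ----------
   Vertices of H: 0 = v1, 1 = v2, 2 = v3, 3 = w1, 4 = w2, 5 = w3.
   Vertices 6 .. n-1 are the added leaves; leaf i is attached to H-vertex att i. *)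
Definition hedge (i j : nat) : bool :=
  (i, j) \in [:: (0,1); (1,2); (0,2); (3,4); (4,5); (3,5); (2,3)].

Definition gadj (n : nat) (att : nat -> nat) : rel 'I_n :=
  fun x y =>
    [|| hedge x y, hedge y x,
        (6 <= x) && (nat_of_ord y == att x)
      | (6 <= y) && (nat_of_ord x == att y)].

Arguments gadj : clear implicits.

(* T_n^1(3,3): all n-6 leaves attached to v3 (vertex 2) *)
Definition T1_33 (n : nat) : rel 'I_n := gadj n (fun _ => 2).
Arguments T1_33 : clear implicits.

(* A maximal matching of G consists of a matching of H together with, at every vertex x of H
   that it leaves exposed and that carries c_x >= 1 leaves, one of the c_x pendant edges at x;
   such a choice is maximal exactly when no edge of H joins two exposed leafless vertices.
   Hence the number of maximal matchings of G and the sum of their sizes are polynomials in the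
   leaf counts c_x, obtained by summing over the 20 matchings of H.  For T_n^1(3,3) they are
   3k + 7 and 9k + 15 with k = n - 6; for G, whose leaves hang at v1, v2, w2, w3, the claim
   becomes a polynomial inequality in these four counts, settled by nonlinear arithmetic in
   each of the 16 cases according to which counts vanish. *)

From mathcomp Require Import all_boot all_order all_algebra.
From mathcomp Require Import zify.
Import GRing.Theory Num.Theory.
Set Implicit Arguments. Unset Strict Implicit. Unset Printing Implicit Defensive.

Section FiniteFacts.
Variable T : finType.
Implicit Types (A B : {set T}) (a b c d : T).

Lemma disjointP A B : reflect (forall x, x \in A -> x \in B -> False) [disjoint A & B].
Proof.
rewrite disjoint_subset; apply: (iffP subsetP) => [sAB x xA xB|nAB x xA].
  by move: (sAB x xA); rewrite inE xB.
by rewrite inE; apply/negP; apply: nAB.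
Qed.

Lemma disjointPn A B : reflect (exists2 x, x \in A & x \in B) (~~ [disjoint A & B]).
Proof.
apply: (iffP idP) => [|[x xA xB]]; last by apply/disjointP => /(_ x xA xB).
by rewrite disjoint_subset => /subsetPn [x xA]; rewrite inE negbK; exists x.
Qed.

Lemma set2_inj a b c d : [set a; b] = [set c; d] -> (a = c /\ b = d) \/ (a = d /\ b = c).
Proof.
move=> eq_ab_cd.
have aS : a \in [set c; d] by rewrite -eq_ab_cd set21.
have bS : b \in [set c; d] by rewrite -eq_ab_cd set22.
have cS : c \in [set a; b] by rewrite eq_ab_cd set21.
have dS : d \in [set a; b] by rewrite eq_ab_cd set22.
case/set2P: aS => ac; case/set2P: bS => bd; subst; auto;
  case/set2P: cS => ?; case/set2P: dS => ?; subst; auto.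
Qed.

Lemma sum_nat_of_bool (P : pred T) : \sum_(x : T) (P x : nat) = #|P|.
Proof.
by rewrite -sum1_card [RHS]big_mkcond; apply: eq_bigr => x _; rewrite unfold_in; case: (P x).
Qed.

Lemma sum_option (F : option T -> nat) :
  \sum_x F x = F None + \sum_y F (Some y).
Proof. by rewrite /index_enum !unlock /= /reducebig foldr_map !unlock. Qed.

Lemma prod_nat_of_bool (P : pred T) : \prod_(x : T) (P x : nat) = [forall x, P x].
Proof.
case: (boolP [forall x, P x]) => [/forallP allP|/forallPn [x nPx]].
  by rewrite big1 // => x _; rewrite allP.
by rewrite (bigD1 x) //= (negbTE nPx).
Qed.

End FiniteFacts.

Lemma card_ord_ge n m : #|[pred i : 'I_n | m <= i]| = n - m.
Proof.
rewrite -sum1_card -[RHS]muln1 -sum_nat_const_nat big_geq_mkord.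
by apply: eq_bigl => i; rewrite !inE.
Qed.

Section Matchings.
Variables (V : finType) (e : rel V).
Implicit Types (M N : {set {set V}}) (f g : {set V}).

Lemma matchingP M :
  reflect (M \subset edges e /\ {in M &, forall f g, f != g -> [disjoint f & g]})
          (is_matching e M).
Proof.
apply: (iffP andP) => [[sME /forall_inP dM]|[sME dM]]; split => //.
  by move=> f g fM gM; move/forall_inP: (dM f fM) => /(_ g gM) /implyP.
by apply/forall_inP => f fM; apply/forall_inP => g gM; apply/implyP; apply: dM.
Qed.

Lemma matching_meet_eq M f g v :
  is_matching e M -> f \in M -> g \in M -> v \in f -> v \in g -> f = g.
Proof.
case/matchingP => _ dM fM gM vf vg; apply/eqP; apply: contraT => /(dM f g fM gM).
by move/disjointFr => /(_ v vf); rewrite vg.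
Qed.

Lemma edge_nonempty f : f \in edges e -> exists x, x \in f.
Proof.
rewrite inE => /existsP [x /existsP [y /andP [_ /eqP ->]]].
by exists x; rewrite set21.
Qed.

Lemma maximal_matchingP M :
  reflect (is_matching e M /\ forall f, f \in edges e -> exists2 g, g \in M & ~~ [disjoint f & g])
          (is_maximal_matching e M).
Proof.
apply: (iffP andP) => [[mM /forallP maxM]|[mM domM]]; split => //.
- move=> f fE; apply/exists_inP; apply: contraT => /exists_inPn /= fM_disj.
  have f_disj g : g \in M -> [disjoint f & g] by move=> gM; apply/negPn/fM_disj.
  case/matchingP: (mM) => sME dM.
  have mfM : is_matching e (f |: M).
    apply/matchingP; split; first by rewrite subUset sub1set fE.
    move=> f1 g1 /setU1P[->|f1M] /setU1P[->|g1M]; rewrite ?eqxx //.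
    - by move=> _; apply: f_disj.
    - by move=> _; rewrite disjoint_sym; apply: f_disj.
    - exact: dM.
  have /eqP eq_fM := implyP (maxM (f |: M)) (introT andP (conj mfM (subsetUr _ _))).
  have [x xf] := edge_nonempty fE.
  have fM : f \in M by rewrite -eq_fM setU11.
  by move: (disjointFr (f_disj f fM) xf); rewrite xf.
- apply/forallP => N; apply/implyP => /andP [mN sMN].
  rewrite eqEsubset andbC sMN /=; apply/subsetP => f fN.
  have [g gM meet_fg] := domM f (subsetP (proj1 (matchingP _ mN)) f fN).
  have [x xf xg] := disjointPn _ _ meet_fg.
  by rewrite (matching_meet_eq mN fN (subsetP sMN g gM) xf xg).
Qed.

Lemma maximal_matchings_gt0 : 0 < #|maximal_matchings e|.
Proof.
have m0 : is_matching e set0 by apply/matchingP; split => [|f]; rewrite ?sub0set ?inE.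
case: (arg_maxnP (fun M => #|M|) m0) => M mM Mmax.
rewrite card_gt0; apply/set0Pn; exists M; rewrite inE /is_maximal_matching mM /=.
apply/forallP => N; apply/implyP => /andP [mN sMN].
by rewrite eq_sym eqEcard sMN; apply: Mmax.
Qed.

End Matchings.

Lemma avm_lt (V W : finType) (e : rel V) (e' : rel W) :
  (\sum_(M in maximal_matchings e) #|M|) * #|maximal_matchings e'| <
  (\sum_(M in maximal_matchings e') #|M|) * #|maximal_matchings e| ->
  (avm e < avm e')%R.
Proof.
move=> lt_cross; rewrite /avm ltr_pdivrMr ?ltr0n ?maximal_matchings_gt0 //.
by rewrite mulrAC ltr_pdivlMr ?ltr0n ?maximal_matchings_gt0 // -!natrM ltr_nat.
Qed.

Definition hedge_list : seq (nat * nat) := [:: (0,1); (1,2); (0,2); (3,4); (4,5); (3,5); (2,3)].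
Definition hsrc k := (nth (0,0) hedge_list k).1.
Definition hdst k := (nth (0,0) hedge_list k).2.

(* Row [j] is the indicator vector, over [hedge_list], of the [j]-th of the 20 matchings of H. *)
Definition hmatching_table : seq (seq bool) :=
  [:: [:: false; false; false; false; false; false; false];
      [:: false; false; false; false; false; false; true];
      [:: false; false; false; false; false; true; false];
      [:: false; false; false; false; true; false; false];
      [:: false; false; false; false; true; false; true];
      [:: false; false; false; true; false; false; false];
      [:: false; false; true; false; false; false; false];
      [:: false; false; true; false; false; true; false];
      [:: false; false; true; false; true; false; false];
      [:: false; false; true; true; false; false; false];
      [:: false; true; false; false; false; false; false];
      [:: false; true; false; false; false; true; false];
      [:: false; true; false; false; true; false; false];
      [:: false; true; false; true; false; false; false];
      [:: true; false; false; false; false; false; false];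
      [:: true; false; false; false; false; false; true];
      [:: true; false; false; false; false; true; false];
      [:: true; false; false; false; true; false; false];
      [:: true; false; false; false; true; false; true];
      [:: true; false; false; true; false; false; false]].

Definition hbit (j k : nat) := nth false (nth [::] hmatching_table j) k.
Definition hcovers (j x : nat) :=
  has (fun k => hbit j k && ((hsrc k == x) || (hdst k == x))) (iota 0 7).
Definition hadjacent (k k' : nat) :=
  [|| hsrc k == hsrc k', hsrc k == hdst k', hdst k == hsrc k' | hdst k == hdst k'].

Lemma hedge_listP k : k < 7 -> [&& hsrc k < 6, hdst k < 6 & hedge (hsrc k) (hdst k)].
Proof. by case: k => [|[|[|[|[|[|[|]]]]]]]. Qed.

Lemma hedge_index x y : hedge x y -> exists2 k, k < 7 & x = hsrc k /\ y = hdst k.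
Proof.
move=> hxy; exists (index (x, y) hedge_list); first by rewrite -[7]/(size hedge_list) index_mem.
by rewrite /hsrc /hdst nth_index.
Qed.

Lemma hedge_list_inj k k' : k < 7 -> k' < 7 ->
  (hsrc k = hsrc k' /\ hdst k = hdst k') \/ (hsrc k = hdst k' /\ hdst k = hsrc k') -> k = k'.
Proof.
by case: k => [|[|[|[|[|[|[|]]]]]]]; case: k' => [|[|[|[|[|[|[|]]]]]]] //= _ _ [[]|[]].
Qed.

Lemma hcoversP j x :
  reflect (exists k, [/\ k < 7, hbit j k & (hsrc k = x \/ hdst k = x)]) (hcovers j x).
Proof.
apply: (iffP hasP) => [[k]|[k [hk hb he]]].
  by rewrite mem_iota => hk /andP [hb /orP [/eqP|/eqP]]; exists k; split; auto.
by exists k; rewrite ?mem_iota // hb; case: he => ->; rewrite eqxx ?orbT.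
Qed.

Lemma hmatching_table_matching j k k' : j < 20 -> k < 7 -> k' < 7 -> k != k' ->
  hbit j k -> hbit j k' -> ~~ hadjacent k k'.
Proof.
have table_ok : all (fun j => all (fun k => all (fun k' =>
    (k != k') && hbit j k && hbit j k' ==> ~~ hadjacent k k') (iota 0 7)) (iota 0 7)) (iota 0 20).
  by [].
move=> hj hk hk' kk' bk bk'.
move/allP: table_ok => /(_ j); rewrite mem_iota hj => /(_ isT) /allP /(_ k).
rewrite mem_iota hk => /(_ isT) /allP /(_ k'); rewrite mem_iota hk' kk' bk bk'.
exact.
Qed.

Lemma hmatching_table_inj j j' : j < 20 -> j' < 20 ->
  (forall k, k < 7 -> hbit j k = hbit j' k) -> j = j'.
Proof.
have table_uniq : all (fun j => all (fun j' =>
    (j != j') ==> has (fun k => hbit j k != hbit j' k) (iota 0 7)) (iota 0 20)) (iota 0 20).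
  by [].
move=> hj hj' same; apply/eqP; apply: contraT => jj'.
move/allP: table_uniq => /(_ j); rewrite mem_iota hj => /(_ isT) /allP /(_ j').
rewrite mem_iota hj' jj' => /(_ isT) /hasP [k]; rewrite mem_iota => hk.
by rewrite same // eqxx.
Qed.

Lemma hmatching_table_complete (b : nat -> bool) :
  (forall k k', k < 7 -> k' < 7 -> k != k' -> hadjacent k k' -> ~~ (b k && b k')) ->
  exists2 j, j < 20 & forall k, k < 7 -> hbit j k = b k.
Proof.
pose no_adjacent bs := all (fun k => all (fun k' => (k != k') && hadjacent k k' ==>
  ~~ (nth false bs k && nth false bs k')) (iota 0 7)) (iota 0 7).
pose in_table bs := has (fun j => all (fun k => hbit j k == nth false bs k) (iota 0 7)) (iota 0 20).
have complete b0 b1 b2 b3 b4 b5 b6 :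
  no_adjacent [:: b0; b1; b2; b3; b4; b5; b6] ==> in_table [:: b0; b1; b2; b3; b4; b5; b6].
  by move: b0 b1 b2 b3 b4 b5 b6; do 7 case.
pose bs := [:: b 0; b 1; b 2; b 3; b 4; b 5; b 6].
have nth_bs k : k < 7 -> nth false bs k = b k by case: k => [|[|[|[|[|[|[|]]]]]]].
move=> bmatch; have bs_ok : no_adjacent bs.
  apply/allP => k; rewrite mem_iota => hk; apply/allP => k'; rewrite mem_iota => hk'.
  by apply/implyP => /andP [kk' adj]; rewrite !nth_bs //; apply: bmatch.
have /hasP [j] := implyP (complete _ _ _ _ _ _ _) bs_ok.
rewrite mem_iota => hj /allP row_j; exists j => // k hk.
by move: (row_j k); rewrite mem_iota hk nth_bs // => /(_ isT) /eqP.
Qed.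

Section LeafCountPolynomials.
Variable c : nat -> nat.

Definition exposed_leafless j x := ~~ hcovers j x && (c x == 0).

Definition row_admissible j :=
  all (fun k => ~~ (exposed_leafless j (hsrc k) && exposed_leafless j (hdst k))) (iota 0 7).

(* [(c x == 0) + c x] is [maxn 1 (c x)]: an exposed vertex with leaves picks one of them. *)
Definition leaf_choices j x := if hcovers j x then 1 else (c x == 0) + c x.

Definition extension_size j :=
  \sum_(k < 7) hbit j k + \sum_(x < 6) (~~ hcovers j x && (c x != 0)).

Definition mm_count := \sum_(j < 20) row_admissible j * \prod_(x < 6) leaf_choices j x.

Definition mm_size_sum :=
  \sum_(j < 20) row_admissible j * extension_size j * \prod_(x < 6) leaf_choices j x.

End LeafCountPolynomials.

Section EqLeafCountPolynomials.
Variables c c' : nat -> nat.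
Hypothesis eq_c : forall x, x < 6 -> c x = c' x.

Lemma eq_row_admissible j : row_admissible c j = row_admissible c' j.
Proof.
apply: eq_in_all => k; rewrite mem_iota => /= hk.
by case/and3P: (hedge_listP hk) => hs hd _; rewrite /exposed_leafless !eq_c.
Qed.

Lemma eq_mm_count : mm_count c = mm_count c'.
Proof.
apply: eq_bigr => j _; rewrite eq_row_admissible.
by congr (_ * _); apply: eq_bigr => x _; rewrite /leaf_choices eq_c.
Qed.

Lemma eq_mm_size_sum : mm_size_sum c = mm_size_sum c'.
Proof.
apply: eq_bigr => j _; rewrite eq_row_admissible /extension_size.
congr (_ * (_ + _) * _); apply: eq_bigr => x _; rewrite ?eq_c //.
by rewrite /leaf_choices eq_c.
Qed.

End EqLeafCountPolynomials.

Section LeafGraph.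
Variable n' : nat.
Local Notation n := n'.+1.
Hypothesis n_gt6 : 6 <= n'.
Variable att : nat -> nat.
Hypothesis att_core : forall l : 'I_n, 6 <= l -> att l < 6.
Local Notation G := (gadj n att).
(* A leaf choice [o] maps each vertex [x] of H to the leaf matched with it, if any. *)
Local Notation leaf_choice := {ffun 'I_6 -> option 'I_n}.

Definition core (x : nat) : 'I_n := inord x.

Lemma coreK x : x < 6 -> core x = x :> nat.
Proof. by move=> hx; rewrite /core inordK // (leq_trans hx (leqW n_gt6)). Qed.

Lemma core_inj x y : x < 6 -> y < 6 -> core x = core y -> x = y.
Proof. by move=> hx hy /(congr1 val); rewrite /= !coreK. Qed.

Lemma core_val (v : 'I_n) : v < 6 -> core v = v.
Proof. by move=> hv; apply: val_inj; rewrite /= coreK. Qed.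

Lemma set2_core_leaf_inj (x x' : 'I_6) (l l' : 'I_n) :
  6 <= l' -> [set core x; l] = [set core x'; l'] -> x = x' /\ l = l'.
Proof.
move=> hl' /set2_inj [[/(core_inj (ltn_ord x) (ltn_ord x')) eq_x ->]|[eq_x _]].
  by split => //; apply: val_inj.
by move: hl'; rewrite -eq_x coreK // leqNgt ltn_ord.
Qed.

Definition core_edge k : {set 'I_n} := [set core (hsrc k); core (hdst k)].
Definition leaf_edge (l : 'I_n) : {set 'I_n} := [set l; core (att l)].

Lemma leaf_edgeC (l : 'I_n) : leaf_edge l = [set core (att l); l].
Proof. exact: setUC. Qed.

Lemma mem_core_edge k v : k < 7 -> v \in core_edge k -> v < 6.
Proof.
move=> hk; case/and3P: (hedge_listP hk) => hs hd _.
by case/set2P => ->; rewrite coreK.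
Qed.

Lemma core_in_core_edge x k : x < 6 -> k < 7 -> core x \in core_edge k -> hsrc k = x \/ hdst k = x.
Proof.
move=> hx hk; case/and3P: (hedge_listP hk) => hs hd _.
by case/set2P => /core_inj eq_x; [left|right]; symmetry; apply: eq_x.
Qed.

Lemma core_in_leaf_edge x (l : 'I_n) : x < 6 -> 6 <= l -> core x \in leaf_edge l -> att l = x.
Proof.
move=> hx hl; case/set2P => [eq_l|/core_inj eq_x]; last by symmetry; apply: eq_x; rewrite ?att_core.
by move: hl; rewrite -eq_l coreK // leqNgt hx.
Qed.

Lemma leaf_in_leaf_edge (l l' : 'I_n) : 6 <= l -> 6 <= l' -> l \in leaf_edge l' -> l = l'.
Proof.
move=> hl hl'; case/set2P => // eq_l.
by move: hl; rewrite eq_l coreK ?att_core // leqNgt att_core.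
Qed.

Lemma leaf_notin_core_edge k (l : 'I_n) : k < 7 -> 6 <= l -> l \notin core_edge k.
Proof. by move=> hk hl; apply/negP => /(mem_core_edge hk); rewrite ltnNge hl. Qed.

Lemma core_edge_neq_leaf_edge k (l : 'I_n) : k < 7 -> 6 <= l -> core_edge k != leaf_edge l.
Proof.
move=> hk hl; apply/eqP => eq_kl.
by move: (leaf_notin_core_edge hk hl); rewrite eq_kl set21.
Qed.

Lemma core_edge_inj k k' : k < 7 -> k' < 7 -> core_edge k = core_edge k' -> k = k'.
Proof.
move=> hk hk' /set2_inj eq_kk'; apply: hedge_list_inj => //.
case/and3P: (hedge_listP hk) => hs hd _; case/and3P: (hedge_listP hk') => hs' hd' _.
by case: eq_kk' => [[]|[]] => /core_inj eq1 /core_inj eq2; [left|right]; split; auto.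
Qed.

Lemma hadjacent_core_edges k k' :
  hadjacent k k' -> exists2 v, v \in core_edge k & v \in core_edge k'.
Proof.
by case/or4P => /eqP eq_kk'; [exists (core (hsrc k))|exists (core (hsrc k))
  |exists (core (hdst k))|exists (core (hdst k))]; rewrite ?set21 ?set22 // eq_kk' ?set21 ?set22.
Qed.

Lemma gadj_edgesP f :
  reflect ((exists2 k, k < 7 & f = core_edge k) \/ (exists2 l : 'I_n, 6 <= l & f = leaf_edge l))
          (f \in edges G).
Proof.
apply: (iffP idP).
- rewrite inE => /existsP [x /existsP [y /andP [exy /eqP ->]]].
  have core_edgeE (u w : 'I_n) k : k < 7 -> u = hsrc k :> nat -> w = hdst k :> nat ->
      [set u; w] = core_edge k.
    move=> hk hx hy; case/and3P: (hedge_listP hk) => hs hd _.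
    by rewrite /core_edge -hx -hy !core_val // ?hx ?hy.
  case/or4P: exy.
  + by case/hedge_index => k hk [hx hy]; left; exists k => //; apply: core_edgeE.
  + by case/hedge_index => k hk [hy hx]; left; exists k => //; rewrite setUC; apply: core_edgeE.
  + by case/andP => hx /eqP hy; right; exists x; rewrite // /leaf_edge -hy core_val // hy att_core.
  + case/andP => hy /eqP hx; right; exists y => //.
    by rewrite /leaf_edge setUC -hx core_val // hx att_core.
- case=> [[k hk ->]|[l hl ->]]; rewrite inE.
  + apply/existsP; exists (core (hsrc k)); apply/existsP; exists (core (hdst k)).
    by case/and3P: (hedge_listP hk) => hs hd hkk; rewrite eqxx andbT /gadj !coreK // hkk.
  + apply/existsP; exists l; apply/existsP; exists (core (att l)).
    by rewrite eqxx andbT /gadj coreK ?att_core // hl eqxx !orbT.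
Qed.

Lemma core_edge_in_edges k : k < 7 -> core_edge k \in edges G.
Proof. by move=> hk; apply/gadj_edgesP; left; exists k. Qed.

Lemma leaf_edge_in_edges (l : 'I_n) : 6 <= l -> leaf_edge l \in edges G.
Proof. by move=> hl; apply/gadj_edgesP; right; exists l. Qed.

Lemma edge_at_leaf f (l : 'I_n) : f \in edges G -> 6 <= l -> l \in f -> f = leaf_edge l.
Proof.
case/gadj_edgesP => [[k hk ->] hl|[l' hl' ->] hl /(leaf_in_leaf_edge hl hl') -> //].
by rewrite (negbTE (leaf_notin_core_edge hk hl)).
Qed.

Definition leaves_at x := #|[set l : 'I_n | (6 <= l) && (att l == x)]|.

Lemma leaves_at_att (l : 'I_n) : 6 <= l -> leaves_at (att l) != 0.
Proof. by move=> hl; rewrite -lt0n card_gt0; apply/set0Pn; exists l; rewrite inE hl eqxx. Qed.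

Definition choice_ok j x (ox : option 'I_n) :=
  if hcovers j x then ox == None
  else if ox is Some l then (6 <= l) && (att l == x) else leaves_at x == 0.

Definition admissible (t : 'I_20 * leaf_choice) :=
  row_admissible leaves_at t.1 && [forall x : 'I_6, choice_ok t.1 x (t.2 x)].

Definition core_part j := [set core_edge (val k) | k in [pred k : 'I_7 | hbit j k]].
Definition leaf_part (o : leaf_choice) :=
  [set [set core x; odflt (core x) (o x)] | x : 'I_6 in [pred x | o x != None]].
Definition extension (t : 'I_20 * leaf_choice) := core_part t.1 :|: leaf_part t.2.

Lemma core_partP j f : reflect (exists2 k, k < 7 /\ hbit j k & f = core_edge k) (f \in core_part j).
Proof.
apply: (iffP imsetP) => [[k hk ->]|[k [hk hb] ->]]; first by exists k.
by exists (Ordinal hk).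
Qed.

Lemma leaf_partP (o : leaf_choice) f :
  reflect (exists x : 'I_6, exists2 l, o x = Some l & f = [set core x; l]) (f \in leaf_part o).
Proof.
apply: (iffP imsetP) => [[x]|[x [l ox ->]]].
  by rewrite inE; case ox: (o x) => //= [l] _ ->; exists x, l.
by exists x; rewrite ?inE ox.
Qed.

Lemma core_part_disjoint (j : 'I_20) :
  {in core_part j &, forall f g : {set 'I_n}, f != g -> [disjoint f & g]}.
Proof.
move=> f g /core_partP [k [hk bk] ->] /core_partP [k' [hk' bk'] ->] neq_kk'.
apply/disjointP => v vk vk'; have v6 := mem_core_edge hk vk.
rewrite -(core_val v6) in vk vk'.
have kk' : k != k' by apply: contraNneq neq_kk' => ->.
have := hmatching_table_matching (ltn_ord j) hk hk' kk' bk bk'; rewrite /hadjacent.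
by case: (core_in_core_edge v6 hk vk) => ->; case: (core_in_core_edge v6 hk' vk') => ->;
  rewrite eqxx ?orbT.
Qed.

Lemma card_core_part j : #|core_part j| = \sum_(k < 7) hbit j k.
Proof.
rewrite card_in_imset; first by rewrite -sum_nat_of_bool.
by move=> k k' _ _ /(core_edge_inj (ltn_ord k) (ltn_ord k')) eq_k; apply: val_inj.
Qed.

Section Admissible.
Variables (j : 'I_20) (o : leaf_choice).
Hypothesis adm : admissible (j, o).

Lemma admissible_row_admissible : row_admissible leaves_at j.
Proof. by case/andP: adm. Qed.

Lemma admissible_choice_ok (x : 'I_6) : choice_ok j x (o x).
Proof. by case/andP: adm => _ /forallP. Qed.

Lemma admissible_some (x : 'I_6) l : o x = Some l -> [/\ ~~ hcovers j x, 6 <= l & att l = x].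
Proof.
move=> ox; have := admissible_choice_ok x; rewrite /choice_ok ox.
by case: (hcovers j x) => //= /andP [-> /eqP ->].
Qed.

Lemma admissible_none (x : 'I_6) : o x = None -> ~~ hcovers j x -> leaves_at x = 0.
Proof.
move=> ox nc; have := admissible_choice_ok x.
by rewrite /choice_ok ox (negbTE nc) => /eqP.
Qed.

Lemma leaf_part_leaf_edge f :
  f \in leaf_part o -> exists x : 'I_6, exists2 l : 'I_n, o x = Some l & f = leaf_edge l /\ 6 <= l.
Proof.
case/leaf_partP => x [l ox ->]; exists x, l => //.
by case: (admissible_some ox) => _ hl ax; rewrite leaf_edgeC ax.
Qed.

Lemma core_leaf_disjoint f g : f \in core_part j -> g \in leaf_part o -> [disjoint f & g].
Proof.
move=> /core_partP [k [hk bk] ->] /leaf_partP [x [l ox ->]]; apply/disjointP => v vk.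
case: (admissible_some ox) => nc hl _; have v6 := mem_core_edge hk vk.
case/set2P => eq_v; last by move: hl; rewrite -eq_v leqNgt v6.
move: vk; rewrite eq_v => /(core_in_core_edge (ltn_ord x) hk) xk.
by move/negP: nc; apply; apply/hcoversP; exists k.
Qed.

Lemma leaf_part_disjoint : {in leaf_part o &, forall f g : {set 'I_n}, f != g -> [disjoint f & g]}.
Proof.
move=> f g /leaf_part_leaf_edge [x [l ox [-> hl]]] /leaf_part_leaf_edge [x' [l' ox' [-> hl']]].
apply: contraNT => /disjointPn [v vl vl']; apply/eqP; congr leaf_edge.
have [v6|v_leaf] := ltnP v 6; last first.
  by rewrite -(leaf_in_leaf_edge v_leaf hl vl) (leaf_in_leaf_edge v_leaf hl' vl').
move: vl vl'; rewrite -(core_val v6).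
move=> /(core_in_leaf_edge v6 hl) al /(core_in_leaf_edge v6 hl') al'.
case: (admissible_some ox) => _ _ ax; case: (admissible_some ox') => _ _ ax'.
have eq_x : x = x' by apply: val_inj; rewrite /= -ax -ax' al al'.
by move: ox'; rewrite -eq_x ox => -[].
Qed.

Lemma core_part_leaf_part0 : core_part j :&: leaf_part o = set0.
Proof.
apply/setP => f; rewrite !inE; apply/negP => /andP [/core_partP [k [hk _] ->]].
case/leaf_part_leaf_edge => x [l _ [eq_kl hl]].
by move: (core_edge_neq_leaf_edge hk hl); rewrite eq_kl eqxx.
Qed.

Lemma card_leaf_part : #|leaf_part o| = \sum_(x < 6) (~~ hcovers j x && (leaves_at x != 0)).
Proof.
rewrite card_in_imset => [|x x']; rewrite ?inE.
  rewrite -sum_nat_of_bool; apply: eq_bigr => x _; rewrite inE.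
  case ox: (o x) => [l|] /=.
    by case: (admissible_some ox) => -> hl <-; rewrite leaves_at_att.
  by case: (boolP (hcovers j x)) => //= nc; rewrite (admissible_none ox nc).
case ox: (o x) => [l|] // _; case ox': (o x') => [l'|] // _ /= eq_l.
case: (admissible_some ox') => _ hl' _.
by case: (set2_core_leaf_inj hl' eq_l).
Qed.

Lemma extension_matching : is_matching G (extension (j, o)).
Proof.
apply/matchingP; split.
  apply/subsetP => f /setUP [/core_partP [k [hk _] ->]|/leaf_part_leaf_edge [x [l _ [-> hl]]]];
    apply/gadj_edgesP; [left; exists k | right; exists l] => //.
move=> f g /setUP [fH|fL] /setUP [gH|gL].
- exact: core_part_disjoint fH gH.
- by move=> _; apply: core_leaf_disjoint.
- by move=> _; rewrite disjoint_sym; apply: core_leaf_disjoint.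
- exact: leaf_part_disjoint fL gL.
Qed.

Lemma covered_by_extension x : x < 6 -> hcovers j x || (leaves_at x != 0) ->
  exists2 g, g \in extension (j, o) & core x \in g.
Proof.
move=> hx; case: (boolP (hcovers j x)) => [/hcoversP [k [hk bk kx]]|nc] /= has_leaf.
  exists (core_edge k); first by apply/setUP; left; apply/core_partP; exists k.
  by case: kx => <-; rewrite ?set21 ?set22.
case ox: (o (Ordinal hx)) => [l|].
  exists [set core x; l]; last by rewrite set21.
  by apply/setUP; right; apply/leaf_partP; exists (Ordinal hx), l.
by move: (admissible_none ox nc) has_leaf => /= ->.
Qed.

Lemma extension_maximal : is_maximal_matching G (extension (j, o)).
Proof.
apply/maximal_matchingP; split; first exact: extension_matching.
have meet_at x (f : {set 'I_n}) : x < 6 -> hcovers j x || (leaves_at x != 0) -> core x \in f ->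
    exists2 g, g \in extension (j, o) & ~~ [disjoint f & g].
  move=> hx cov xf; have [g gE xg] := covered_by_extension hx cov.
  by exists g => //; apply/disjointPn; exists (core x).
move=> f /gadj_edgesP [[k hk ->]|[l hl ->]]; last first.
  by apply: (meet_at (att l)); rewrite ?att_core ?leaves_at_att ?orbT ?set22.
case/and3P: (hedge_listP hk) => hs hd _.
move/allP: admissible_row_admissible => /(_ k); rewrite mem_iota hk => /(_ isT).
rewrite /exposed_leafless negb_and !negb_and !negbK => /orP [cov|cov].
  by apply: (meet_at (hsrc k)); rewrite ?set21.
by apply: (meet_at (hdst k)); rewrite ?set22.
Qed.

End Admissible.

Definition leaf_choice_of (M : {set {set 'I_n}}) : leaf_choice :=
  [ffun x : 'I_6 => [pick l : 'I_n | (6 <= l) && ([set core x; l] \in M)]].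

Section FromMatching.
Variable M : {set {set 'I_n}}.
Hypothesis mM : is_matching G M.

Lemma matching_sub_edges : M \subset edges G.
Proof. by case/matchingP: mM. Qed.

Lemma leaf_choice_ofP (x : 'I_6) (l : 'I_n) :
  (leaf_choice_of M x == Some l) = (6 <= l) && ([set core x; l] \in M).
Proof.
rewrite ffunE; case: pickP => [l' /andP [hl' l'M]|none]; last by rewrite (none l).
apply/eqP/andP => [[<-] //|[hl lM]]; congr Some.
have eq_edges := matching_meet_eq mM l'M lM (set21 _ _) (set21 _ _).
have : l' \in [set core x; l] by rewrite -eq_edges set22.
by case/set2P => // eq_l'; move: hl'; rewrite eq_l' coreK ?ltn_ord // leqNgt ltn_ord.
Qed.

Lemma matching_core_row : exists j : 'I_20, forall k, k < 7 -> hbit j k = (core_edge k \in M).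
Proof.
have core_matching k k' : k < 7 -> k' < 7 -> k != k' -> hadjacent k k' ->
    ~~ ((core_edge k \in M) && (core_edge k' \in M)).
  move=> hk hk' kk' /hadjacent_core_edges [v vk vk']; apply/negP => /andP [kM k'M].
  by move/eqP: kk'; apply; apply: core_edge_inj => //; apply: (matching_meet_eq mM kM k'M vk vk').
have [j hj row_j] := hmatching_table_complete core_matching.
by exists (Ordinal hj).
Qed.

Variable j : 'I_20.
Hypothesis row_j : forall k, k < 7 -> hbit j k = (core_edge k \in M).

Lemma matching_at_core x g : x < 6 -> g \in M -> core x \in g ->
  hcovers j x \/ exists2 l : 'I_n, 6 <= l /\ att l = x & g = leaf_edge l.
Proof.
move=> hx gM xg; case/gadj_edgesP: (subsetP matching_sub_edges g gM) => [[k hk eg]|[l hl eg]].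
  left; apply/hcoversP; exists k; split; rewrite ?row_j -?eg //.
  by apply: core_in_core_edge; rewrite -?eg.
by right; exists l => //; split => //; apply: core_in_leaf_edge; rewrite -?eg.
Qed.

Lemma extension_of_matching : M = extension (j, leaf_choice_of M).
Proof.
apply/setP => f; apply/idP/setUP => [fM|[/core_partP [k [hk bk] ->]|/leaf_partP [x [l ox ->]]]].
- case/gadj_edgesP: (subsetP matching_sub_edges f fM) => [[k hk ef]|[l hl ef]].
    by left; apply/core_partP; exists k; rewrite ?row_j -?ef.
  right; apply/leaf_partP; exists (Ordinal (att_core hl)), l; last by rewrite ef leaf_edgeC.
  by apply/eqP; rewrite leaf_choice_ofP hl /= -leaf_edgeC -ef.
- by rewrite -row_j.
- by move/eqP: ox; rewrite leaf_choice_ofP => /andP [].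
Qed.

Hypothesis maxM : is_maximal_matching G M.

Lemma maximal_row_admissible : row_admissible leaves_at j.
Proof.
case/maximal_matchingP: maxM => _ dominating.
apply/allP => k; rewrite mem_iota => /= hk; apply/negP => /andP [bare_s bare_d].
have [g gM /disjointPn [v vk vg]] := dominating _ (core_edge_in_edges hk).
case/and3P: (hedge_listP hk) => hs hd _.
have [x [hx /andP [nc /eqP no_leaf]] eq_v] :
    exists2 x, x < 6 /\ exposed_leafless leaves_at j x & v = core x.
  by case/set2P: vk => ->; [exists (hsrc k)|exists (hdst k)].
rewrite eq_v in vg; case: (matching_at_core hx gM vg) => [cov|[l [hl al] _]].
  by rewrite cov in nc.
by move: (leaves_at_att hl); rewrite al no_leaf.
Qed.

Lemma maximal_choice_ok (x : 'I_6) : choice_ok j x (leaf_choice_of M x).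
Proof.
have choice_some l : leaf_choice_of M x = Some l -> 6 <= l /\ [set core x; l] \in M.
  by move/eqP; rewrite leaf_choice_ofP => /andP.
have choice_of_leaf_edge (l : 'I_n) :
    6 <= l -> att l = x -> leaf_edge l \in M -> leaf_choice_of M x = Some l.
  by move=> hl al lM; apply/eqP; rewrite leaf_choice_ofP hl -al -leaf_edgeC lM.
rewrite /choice_ok; case: (boolP (hcovers j x)) => [cov|nc].
  case ox: (leaf_choice_of M x) => [l|] //; have [hl lM] := choice_some l ox.
  case/hcoversP: cov => k [hk bk kx].
  have kM : core_edge k \in M by rewrite -row_j.
  have xk : core x \in core_edge k by case: kx => <-; rewrite ?set21 ?set22.
  have eq_kl := matching_meet_eq mM kM lM xk (set21 _ _).
  by move: (leaf_notin_core_edge hk hl); rewrite eq_kl set22.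
case ox: (leaf_choice_of M x) => [l|].
  have [hl lM] := choice_some l ox.
  have e_l := edge_at_leaf (subsetP matching_sub_edges _ lM) hl (set22 _ _).
  have xl : core x \in leaf_edge l by rewrite -e_l set21.
  by rewrite hl (core_in_leaf_edge (ltn_ord x) hl xl) eqxx.
apply: contraT; rewrite -lt0n card_gt0 => /set0Pn [l]; rewrite inE => /andP [hl /eqP al].
case/maximal_matchingP: maxM => _ dominating.
have [g gM /disjointPn [v /set2P [eq_v|eq_v] vg]] := dominating _ (leaf_edge_in_edges hl).
  rewrite eq_v in vg.
  have eq_g := edge_at_leaf (subsetP matching_sub_edges _ gM) hl vg.
  by rewrite (choice_of_leaf_edge l) // -eq_g in ox.
rewrite eq_v al in vg; case: (matching_at_core (ltn_ord x) gM vg) => [cov|[l' [hl' al'] eg]].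
  by rewrite cov in nc.
by rewrite (choice_of_leaf_edge l') // -eg in ox.
Qed.

Lemma maximal_admissible : admissible (j, leaf_choice_of M).
Proof.
by apply/andP; split; [exact: maximal_row_admissible|apply/forallP; exact: maximal_choice_ok].
Qed.

End FromMatching.

Lemma core_edge_in_extension j o k : admissible (j, o) -> k < 7 ->
  (core_edge k \in extension (j, o)) = hbit j k.
Proof.
move=> adm hk; apply/idP/idP => [|bk]; last by apply/setUP; left; apply/core_partP; exists k.
case/setUP => [/core_partP [k' [hk' bk'] /(core_edge_inj hk hk') -> //]|/(leaf_part_leaf_edge adm)].
by case=> x [l _ [eq_kl hl]]; move: (core_edge_neq_leaf_edge hk hl); rewrite eq_kl eqxx.
Qed.

Lemma choice_in_extension j o (x : 'I_6) (l : 'I_n) : admissible (j, o) ->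
  (o x == Some l) = ([set core x; l] \in extension (j, o)) && (6 <= l).
Proof.
move=> adm; apply/eqP/andP => [ox|[]].
  by split; [apply/setUP; right; apply/leaf_partP; exists x, l|case: (admissible_some adm ox)].
case/setUP => [/core_partP [k [hk _] eq_k] hl|/leaf_partP [x' [l' ox' eq_l]] hl].
  by move: (leaf_notin_core_edge hk hl); rewrite -eq_k set22.
case: (admissible_some adm ox') => _ hl' _.
by case: (set2_core_leaf_inj hl' eq_l) => -> ->.
Qed.

Lemma extension_inj : {in [set t | admissible t] &, injective extension}.
Proof.
move=> [j o] [j' o']; rewrite !inE => adm adm' eq_ext.
have eq_jj' : j = j'.
  apply: val_inj; apply: hmatching_table_inj (ltn_ord j) (ltn_ord j') _ => k hk.
  by rewrite -(core_edge_in_extension adm hk) -(core_edge_in_extension adm' hk) eq_ext.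
move: adm' eq_ext; rewrite -{}eq_jj' => adm' eq_ext; congr pair; apply/ffunP => x.
have same_choice l : (o x == Some l) = (o' x == Some l).
  by rewrite (choice_in_extension _ _ adm) eq_ext -(choice_in_extension _ _ adm').
case ox: (o x) => [l|]; first by apply/esym/eqP; rewrite -same_choice ox.
by case ox': (o' x) => [l'|] //; move: (same_choice l'); rewrite ox ox' eqxx.
Qed.

Lemma maximal_matchingsE : maximal_matchings G = extension @: [set t | admissible t].
Proof.
apply/setP => M; rewrite inE; apply/idP/imsetP => [maxM|[[j o] adm ->]].
  have mM : is_matching G M by case/andP: maxM.
  have [j row_j] := matching_core_row mM.
  exists (j, leaf_choice_of M); last exact: extension_of_matching.
  by rewrite inE; apply: maximal_admissible.
by rewrite inE in adm; apply: extension_maximal.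
Qed.

Lemma card_extension j o : admissible (j, o) -> #|extension (j, o)| = extension_size leaves_at j.
Proof.
move=> adm; rewrite cardsU (core_part_leaf_part0 adm) cards0 subn0.
by rewrite card_core_part (card_leaf_part adm).
Qed.

Lemma sum_choice_ok j (x : 'I_6) :
  \sum_(ox : option 'I_n) (choice_ok j x ox : nat) = leaf_choices leaves_at j x.
Proof.
rewrite sum_option /choice_ok /leaf_choices; case: (hcovers j x) => /=; first by rewrite big1.
by congr (_ + _); rewrite sum_nat_of_bool /leaves_at cardsE.
Qed.

Lemma sum_admissible j :
  \sum_(o : leaf_choice) (admissible (j, o) : nat) =
  row_admissible leaves_at j * \prod_(x < 6) leaf_choices leaves_at j x.
Proof.
rewrite /admissible /=; case: (row_admissible leaves_at j) => /=; last by rewrite big1.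
rewrite mul1n; under eq_bigr do rewrite -prod_nat_of_bool.
rewrite -(bigA_distr_bigA (fun (x : 'I_6) ox => (choice_ok j x ox : nat))) /=.
by apply: eq_bigr => x _; apply: sum_choice_ok.
Qed.

Lemma card_maximal_matchings : #|maximal_matchings G| = mm_count leaves_at.
Proof.
rewrite maximal_matchingsE card_in_imset; last exact: extension_inj.
rewrite cardsE -sum_nat_of_bool -(pair_big predT predT (fun j o => (admissible (j, o) : nat))) /=.
by apply: eq_bigr => j _; rewrite sum_admissible.
Qed.

Lemma sum_card_maximal_matchings : \sum_(M in maximal_matchings G) #|M| = mm_size_sum leaves_at.
Proof.
rewrite maximal_matchingsE big_imset /=; last exact: extension_inj.
have -> : \sum_(t in [set t | admissible t]) #|extension t| =
    \sum_(j : 'I_20) \sum_(o : leaf_choice) admissible (j, o) * #|extension (j, o)|.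
  rewrite pair_big big_mkcond; apply: eq_bigr => -[j o] _ /=.
  by rewrite inE; case: (admissible (j, o)); rewrite ?mul1n.
apply: eq_bigr => j _.
rewrite -mulnA [_ * \prod_(x < 6) _]mulnC mulnA -sum_admissible big_distrl /=.
apply: eq_bigr => o _.
by case adm: (admissible (j, o)); rewrite ?mul0n // card_extension ?adm.
Qed.

Lemma leaves_at_eq0 x : (forall l : 'I_n, 6 <= l -> att l != x) -> leaves_at x = 0.
Proof.
move=> not_at_x; apply/eqP; rewrite cards_eq0; apply/eqP/setP => l; rewrite !inE.
by apply/negP => /andP [hl /eqP ax]; move: (not_at_x l hl); rewrite ax eqxx.
Qed.

Lemma sum_leaves_at (s : seq nat) : uniq s -> (forall l : 'I_n, 6 <= l -> att l \in s) ->
  \sum_(x <- s) leaves_at x = n - 6.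
Proof.
move=> s_uniq s_att; rewrite -card_ord_ge -sum_nat_of_bool.
under eq_bigr do rewrite /leaves_at cardsE -sum_nat_of_bool.
rewrite exchange_big /=; apply: eq_bigr => l _.
case: (boolP (6 <= l)) => hl /=; last by rewrite big1.
transitivity (count_mem (att l) s); last by rewrite count_uniq_mem // s_att.
by rewrite -sum1_count [RHS]big_mkcond; apply: eq_bigr => x _; rewrite /= eq_sym; case: eqP.
Qed.

End LeafGraph.

Definition profile6 (a b c d e f : nat) (x : nat) := nth 0 [:: a; b; c; d; e; f] x.

Lemma mm_count_iota c :
  mm_count c = \sum_(0 <= j < 20) row_admissible c j * \prod_(0 <= x < 6) leaf_choices c j x.
Proof. by rewrite big_mkord; apply: eq_bigr => j _; rewrite big_mkord. Qed.

Lemma mm_size_sum_iota c :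
  mm_size_sum c = \sum_(0 <= j < 20) row_admissible c j *
    (\sum_(0 <= k < 7) hbit j k + \sum_(0 <= x < 6) (~~ hcovers j x && (c x != 0))) *
    \prod_(0 <= x < 6) leaf_choices c j x.
Proof. by rewrite big_mkord; apply: eq_bigr => j _; rewrite /extension_size !big_mkord. Qed.

Ltac expand_leaf_polynomial :=
  rewrite ?mm_count_iota ?mm_size_sum_iota /= !unlock /=
          /leaf_choices /row_admissible /exposed_leafless /profile6 /=.

Lemma mm_count_T1_33 k : 0 < k -> mm_count (profile6 0 0 k 0 0 0) = 3 * k + 7.
Proof. by case: k => // k _; expand_leaf_polynomial; lia. Qed.

Lemma mm_size_sum_T1_33 k : 0 < k -> mm_size_sum (profile6 0 0 k 0 0 0) = 9 * k + 15.
Proof. by case: k => // k _; expand_leaf_polynomial; lia. Qed.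

Lemma mm_ratio_lt a b c d : 0 < a + b + c + d ->
  (9 * (a + b + c + d) + 15) * mm_count (profile6 a b 0 0 c d) <
  mm_size_sum (profile6 a b 0 0 c d) * (3 * (a + b + c + d) + 7).
Proof.
by case: a => [|a]; case: b => [|b]; case: c => [|c]; case: d => [|d] // _;
  expand_leaf_polynomial; nia.
Qed.

Lemma mm_counts_T1_33 n : 7 <= n ->
  #|maximal_matchings (T1_33 n)| = 3 * (n - 6) + 7 /\
  \sum_(M in maximal_matchings (T1_33 n)) #|M| = 9 * (n - 6) + 15.
Proof.
case: n => [//|n'] n_ge7.
have att_lt6 (l : 'I_n'.+1) : 6 <= l -> 2 < 6 by [].
have c_profile x : x < 6 -> leaves_at n' (fun=> 2) x = profile6 0 0 (n'.+1 - 6) 0 0 0 x.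
  case: x => [|[|[|[|[|[|]]]]]] // _; try by apply: leaves_at_eq0.
  by rewrite -(@sum_leaves_at n' (fun=> 2) [:: 2]) // big_seq1.
rewrite /T1_33 (card_maximal_matchings n_ge7 att_lt6) (sum_card_maximal_matchings n_ge7 att_lt6).
rewrite (eq_mm_count c_profile) (eq_mm_size_sum c_profile).
by rewrite mm_count_T1_33 ?mm_size_sum_T1_33 ?subn_gt0.
Qed.

Lemma mm_counts_gadj n att : 7 <= n ->
  (forall i, 6 <= i < n -> att i \in [:: 0; 1; 4; 5]) ->
  exists a b c d, [/\ a + b + c + d = n - 6,
    #|maximal_matchings (gadj n att)| = mm_count (profile6 a b 0 0 c d) &
    \sum_(M in maximal_matchings (gadj n att)) #|M| = mm_size_sum (profile6 a b 0 0 c d)].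
Proof.
case: n => [//|n'] n_ge7 att_in.
have att_leaf (l : 'I_n'.+1) : 6 <= l -> att l \in [:: 0; 1; 4; 5].
  by move=> hl; apply: att_in; rewrite hl ltn_ord.
have att_lt6 (l : 'I_n'.+1) : 6 <= l -> att l < 6.
  by move=> /att_leaf; rewrite !inE => /or4P [] /eqP ->.
set c := leaves_at n' att; exists (c 0), (c 1), (c 4), (c 5).
have c_profile x : x < 6 -> c x = profile6 (c 0) (c 1) 0 0 (c 4) (c 5) x.
  case: x => [|[|[|[|[|[|]]]]]] // _; apply: leaves_at_eq0 => l /att_leaf;
    by rewrite !inE; case/or4P => /eqP ->.
split.
- by rewrite -(@sum_leaves_at n' att [:: 0; 1; 4; 5]) // !big_cons big_nil addn0 !addnA.
- by rewrite (card_maximal_matchings n_ge7 att_lt6) (eq_mm_count c_profile).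
- by rewrite (sum_card_maximal_matchings n_ge7 att_lt6) (eq_mm_size_sum c_profile).
Qed.

Local Open Scope ring_scope.

Theorem lemma4p2 (n : nat) (att : nat -> nat) :
  (7 <= n)%N ->
  (forall i : nat, (6 <= i < n)%N -> att i \in [:: 0%N; 1%N; 4%N; 5%N]) ->
  avm (T1_33 n) < avm (gadj n att).
Proof.
move=> n_ge7 att_in; apply: avm_lt.
have [a [b [c [d [abcd -> ->]]]]] := mm_counts_gadj n_ge7 att_in.
have [-> ->] := mm_counts_T1_33 n_ge7.
by rewrite -abcd; apply: mm_ratio_lt; rewrite abcd subn_gt0.
Qed.
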